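(* Let $H$ be a fermionic parity-preserving Hamiltonian on $h$. Then $$[H_t,H_{t'}]=0\qquad\text{for all } t,t'\in\{0,\dots,N-1\}.$$ Consequently, with $\mathcal V:=\prod_{t=0}^{N-1}e^{i\epsilon tH_t}$ and any operators $O^{(0)},\dots,O^{(N-1)}$ on $h$, $$\mathcal V\Big(\prod_{t}O^{(t)}_t\Big)\mathcal V^\dagger=\prod_te^{i\epsilon tH_t}O^{(t)}_te^{-i\epsilon tH_t},$$ where both products are taken in the same order of $t$. In other words, each factor is replaced by its Heisenberg-evolved version $(O^{(t)}(\epsilon t))_t$ with $O(s)=e^{isH}Oe^{-isH}$.
   Context: Fix integers $L\ge1$, $N\ge1$ and a real $\epsilon>0$. The space $h$. Let $h$ be the fermionic Fock space of $L$ modes with ladder operators $a_i$ satisfying the canonical anticommutation relations. The space $\mathcal H$. Let $\mathcal H$ be the Fock space generated by $a_{ti}$, $t=0,\dots,N-1$, $i=1,\dots,L$, with $\{a_{ti},a^\dagger_{t'j}\}=\delta_{tt'}\delta_{ij}$ and all other anticommutators zero. In particular, ladder operators at different $t$ anticommute. Placing operators on a slice. For an operator $O$ on $h$, $O_t$ is its image under the unital $*$-homomorphism determined by $a_i\mapsto a_{ti}$. Parity preservation. $H$ is parity preserving if it is an even polynomial in the ladder operators, i.e. each monomial contains an even number of creation/annihilation operators. *)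

From HB Require Import structures.
From mathcomp Require Import all_boot all_order all_algebra.
From mathcomp Require Import all_classical all_reals all_analysis.
From mathcomp Require Import complex.
Unset Printing Implicit Defensive.
Import Order.TTheory GRing.Theory Num.Theory.
Import numFieldNormedType.Exports.
Local Open Scope classical_set_scope.
Local Open Scope ring_scope.

(* Operators on the fermionic Fock space of M modes: complex 2^M x 2^M matrices.
   The basis vector with index k (k < 2^M) is the occupation-number state
   |n_0 ... n_(M-1)> with n_j = the j-th binary digit of k. *)
Definition fop (R : realType) (M : nat) := 'M[R[i]]_(2 ^ M).

Definition occ (k j : nat) : bool := odd (k %/ 2 ^ j).

(* Jordan-Wigner sign: number of occupied modes strictly below j. *)
Definition jw_count (k j : nat) : nat := \sum_(l < j) occ k l.

(* Annihilation operator a_j on the Fock space of M modes: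
   a_j |n> = (-1)^(sum_(l<j) n_l) n_j |n - e_j>. *)
Definition annih (R : realType) (M : nat) (j : nat) : fop R M :=
  \matrix_(x, y)
    (if occ y j && ((x + 2 ^ j)%N == y :> nat)
     then (-1) ^+ jw_count y j else 0).

Definition adj (R : realType) (n : nat) (A : 'M[R[i]]_n) : 'M[R[i]]_n :=
  map_mx Num.conj (A^T).
Arguments adj {R n} A.

Definition creat (R : realType) (M : nat) (j : nat) : fop R M := adj (annih R M j).

Definition ladder (R : realType) (M : nat) (l : 'I_M * bool) : fop R M :=
  if l.2 then creat R M l.1 else annih R M l.1.

Definition monomial (R : realType) (M : nat) (w : seq ('I_M * bool)) : fop R M :=
  \prod_(l <- w) ladder R M l.

Definition parity_preserving (R : realType) (M : nat) (H : fop R M) : Prop :=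
  exists s : seq (R[i] * seq ('I_M * bool)),
    all (fun p => ~~ odd (size p.2)) s /\
    H = \sum_(p <- s) p.1 *: monomial R M p.2.

Definition herm_op (R : realType) (n : nat) (A : 'M[R[i]]_n) : Prop := adj A = A.
Arguments herm_op {R n} A.

Definition cre (R : realType) (z : R[i]) : R := let: Complex a _ := z in a.
Definition cim (R : realType) (z : R[i]) : R := let: Complex _ b := z in b.
Arguments cre {R} z.
Arguments cim {R} z.

(* Limit of a sequence of complex numbers, computed componentwise
   (R[i] carries no topology instance in the libraries). *)
Definition clim {R : realType} (u : nat -> R[i]) : R[i] :=
  Complex (lim ((fun m => cre (u m)) @ \oo)) (lim ((fun m => cim (u m)) @ \oo)).

Definition expm (R : realType) (n : nat) (A : 'M[R[i]]_n) : 'M[R[i]]_n :=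
  \matrix_(x, y)
    clim (fun m : nat => \sum_(k < m) ((A ^+ k) x y / (k`!)%:R)).
Arguments expm {R n} A.

Definition annih_ti (R : realType) (N L : nat) (t i : nat) : fop R (N * L) :=
  annih R (N * L) (t * L + i).

Definition slice_hom (R : realType) (N L : nat) (t : nat)
    (phi : fop R L -> fop R (N * L)) : Prop :=
  [/\ forall (c : R[i]) (A B : fop R L), phi (c *: A + B) = c *: phi A + phi B,
      forall A B : fop R L, phi (A * B) = phi A * phi B,
      phi 1 = 1,
      forall A : fop R L, phi (adj A) = adj (phi A) &
      forall i : nat, (i < L)%N -> phi (annih R L i) = annih_ti R N L t i].

From HB Require Import structures.
From mathcomp Require Import all_boot all_order all_algebra.
From mathcomp Require Import all_classical all_reals all_analysis.
From mathcomp Require Import complex.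
From mathcomp Require Import lra zify ring.
Import Order.TTheory GRing.Theory Num.Theory.
Import numFieldNormedType.Exports.

(* Ladder operators of distinct modes anticommute (the Jordan-Wigner signs), so an
   even monomial in the modes of slice s commutes with every ladder operator of a
   slice t <> s, and hence so does H_s.  The ladder operators of h generate all
   operators on h: prod_i a_i a_i^dagger is the vacuum projector |0><0|, and every
   matrix unit |x><y| is obtained from it by creation operators on the left and
   annihilation operators on the right.  As phi_t is a unital homomorphism, H_s
   commutes with every O_t for t <> s.  The exponentials exp(i eps s H_s) then
   commute with each other and with every O_t, t <> s, and the conjugation
   identity is a rearrangement of the product, (exp(i eps t H_t))^dagger being
   exp(-i eps t H_t) since H is hermitian. *)

Lemma occ_pow_leq x q : occ x q -> 2 ^ q <= x.
Proof. by rewrite /occ; case: (leqP (2 ^ q) x) => // h; rewrite divn_small. Qed.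

Lemma divn_addn_pow n q : (n + 2 ^ q) %/ 2 ^ q = (n %/ 2 ^ q).+1.
Proof. by rewrite divnDr ?dvdnn // divnn expn_gt0 addn1. Qed.

Lemma occ_addn_pow_self n q : occ (n + 2 ^ q) q = ~~ occ n q.
Proof. by rewrite /occ divn_addn_pow oddS. Qed.

Lemma occ_addn_pow n q j : j != q -> ~~ occ n q -> occ (n + 2 ^ q) j = occ n j.
Proof.
rewrite /occ; case: (ltngtP j q) => // hjq _ hn.
- have -> : 2 ^ q = 2 ^ (q - j) * 2 ^ j by rewrite -expnD subnK // ltnW.
  rewrite divnDr ?dvdn_mull // mulnK ?expn_gt0 // oddD oddX /=.
  by rewrite subn_eq0 leqNgt hjq /= addbF.
- have -> : 2 ^ j = 2 ^ q * 2 ^ (j - q) by rewrite -expnD subnKC // ltnW.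
  rewrite !divnMA divn_addn_pow -(prednK (_ : 0 < j - q)) ?subn_gt0 //.
  by rewrite expnS !divnMA !divn2 -uphalfE uphalf_half (negbTE hn).
Qed.

Lemma jw_count_addn_pow n q j :
  ~~ occ n q -> jw_count (n + 2 ^ q) j = jw_count n j + (q < j).
Proof.
move=> hn; elim: j => [|j IH]; first by rewrite /jw_count !big_ord0.
rewrite /jw_count in IH *; rewrite !big_ord_recr /= IH.
have [->|hjq] := eqVneq j q.
  by rewrite occ_addn_pow_self hn (negbTE hn) ltnn ltnSn addn0 addn1.
have -> : (q < j.+1) = (q < j) by rewrite ltnS leq_eqVlt eq_sym (negbTE hjq).
by rewrite occ_addn_pow // addnAC.
Qed.

Lemma addn_pow_ltn x p M :
  x < 2 ^ M -> p < M -> ~~ occ x p -> x + 2 ^ p < 2 ^ M.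
Proof.
move=> hx hp hn.
have eM : 2 ^ M = 2 ^ (M - p) * 2 ^ p by rewrite -expnD subnK // ltnW.
have hq : x %/ 2 ^ p < 2 ^ (M - p) by rewrite ltn_divLR ?expn_gt0 // -eM.
have hq2 : (x %/ 2 ^ p).+1 < 2 ^ (M - p).
  rewrite ltn_neqAle hq andbT; apply: contraNneq hn => e.
  by move: (congr1 odd e); rewrite /= oddX orbF subn_eq0 leqNgt hp => /negbFE.
have hr : x %% 2 ^ p < 2 ^ p by rewrite ltn_pmod ?expn_gt0.
rewrite eM {1}(divn_eq x (2 ^ p)).
move: hq2 hr; set a := x %/ 2 ^ p; set r := x %% 2 ^ p; set P := 2 ^ p.
set Q := 2 ^ (M - p); nia.
Qed.

(* [j] is the top bit of [x]. *)
Lemma top_bit_decomposition x : 0 < x ->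
  exists j z, [/\ x = z + 2 ^ j, ~~ occ z j, 2 ^ j <= x & z < x].
Proof.
move=> hx; have /andP[h1 h2] := trunc_log_bounds (isT : 1 < 2) hx.
set j := trunc_log 2 x in h1 h2; exists j, (x - 2 ^ j).
have hocc : occ x j.
  rewrite /occ; suff -> : x %/ 2 ^ j = 1 by [].
  apply/eqP; rewrite eqn_leq -ltnS ltn_divLR ?expn_gt0 // -expnS h2.
  by rewrite leq_divRL ?expn_gt0 // mul1n.
split=> //; first by rewrite subnK.
- by rewrite -occ_addn_pow_self subnK.
- by rewrite ltn_subrL expn_gt0 hx.
Qed.

Section ComplexMatrices.
Context {R : realType} {n : nat}.
Local Open Scope ring_scope.
Implicit Types A B : 'M[R[i]]_n.

Lemma adjmxE A x y : adj A x y = Num.conj (A y x).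
Proof. by rewrite !mxE. Qed.

Lemma adjmx0 : adj (0 : 'M[R[i]]_n) = 0.
Proof. by apply/matrixP => x y; rewrite !mxE rmorph0. Qed.

Lemma adjmx1 : adj (1 : 'M[R[i]]_n) = 1.
Proof. by apply/matrixP => x y; rewrite !mxE conjC_nat eq_sym. Qed.

Lemma adjmxD A B : adj (A + B) = adj A + adj B.
Proof. by apply/matrixP => x y; rewrite !mxE rmorphD. Qed.

Lemma adjmxN A : adj (- A) = - adj A.
Proof. by apply/matrixP => x y; rewrite !mxE rmorphN. Qed.

Lemma adjmxZ c A : adj (c *: A) = Num.conj c *: adj A.
Proof. by apply/matrixP => x y; rewrite !mxE rmorphM. Qed.

Lemma adjmxM A B : adj (A * B) = adj B * adj A.
Proof.
apply/matrixP => x y; rewrite -!mulmxE !mxE rmorph_sum.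
by apply: eq_bigr => z _; rewrite !mxE rmorphM mulrC.
Qed.

Lemma adjmxK A : adj (adj A) = A.
Proof. by apply/matrixP => x y; rewrite !mxE conjCK. Qed.

Lemma adjmxX A k : adj (A ^+ k) = adj A ^+ k.
Proof.
elim: k => [|k IH]; first by rewrite !expr0 adjmx1.
by rewrite exprS adjmxM IH exprSr.
Qed.

Lemma adjmx_sum (I : Type) (r : seq I) (F : I -> 'M[R[i]]_n) :
  adj (\sum_(i <- r) F i) = \sum_(i <- r) adj (F i).
Proof. by elim: r => [|i r IH]; rewrite ?big_nil ?adjmx0 // !big_cons adjmxD IH. Qed.

Lemma adjmx_prod (I : Type) (r : seq I) (F : I -> 'M[R[i]]_n) :
  adj (\prod_(i <- r) F i) = \prod_(i <- rev r) adj (F i).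
Proof.
elim: r => [|i r IH]; first by rewrite !big_nil adjmx1.
by rewrite big_cons adjmxM IH rev_cons big_rcons.
Qed.

Lemma adjmx_delta (x y : 'I_n) : adj (delta_mx x y : 'M[R[i]]_n) = delta_mx y x.
Proof. by apply/matrixP => u v; rewrite !mxE conjC_nat andbC. Qed.

Lemma opp_mxE A x y : (- A) x y = - A x y.
Proof. by rewrite mxE. Qed.

Lemma mul_mxE A B x y : (A * B) x y = \sum_z A x z * B z y.
Proof. by rewrite -mulmxE mxE. Qed.

Lemma scalemxMl c A B : (c *: A) * B = c *: (A * B).
Proof. by rewrite -!mulmxE scalemxAl. Qed.

Lemma scalemxMr c A B : A * (c *: B) = c *: (A * B).
Proof. by rewrite -!mulmxE scalemxAr. Qed.

Lemma sum_ord_pick (w : nat) (F : nat -> R[i]) :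
  \sum_(z < n) (if (z : nat) == w then F z else 0) = if (w < n)%N then F w else 0.
Proof.
case: ltnP => h.
  rewrite (bigD1 (Ordinal h)) //= eqxx big1 ?addr0 // => z hz.
  by case: eqP => // e; case/eqP: hz; apply: val_inj.
by apply: big1 => z _; case: eqP => // e; move: (ltn_ord z); rewrite e ltnNge h.
Qed.

End ComplexMatrices.

Section ProductRearrangement.
Variable T : pzRingType.
Local Open Scope ring_scope.

Lemma prod_anticomm (I : Type) (r : seq I) (F : I -> T) (Y : T) :
  (forall x, F x * Y = - (Y * F x)) ->
  (\prod_(x <- r) F x) * Y = (-1) ^+ size r * (Y * \prod_(x <- r) F x).
Proof.
move=> hF; elim: r => [|x r IH] /=; first by rewrite big_nil mul1r mulr1 expr0 mul1r.
rewrite big_cons -mulrA IH exprS [F x * _]mulrA (commr_sign (F x)) -mulrA.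
by rewrite [F x * (Y * _)]mulrA hF mulN1r mulNr mulNr mulrN !mulrA.
Qed.

(* Peel off the first factor [U t * O t * V t]: [V t] travels left past all the
   factors with index [s != t], then [O t] past the [U s]. *)
Lemma prod_sandwich (I : eqType) (r : seq I) (U O V : I -> T) : uniq r ->
  (forall s t, s \in r -> t \in r -> s != t ->
     [/\ GRing.comm (O t) (U s), GRing.comm (V t) (U s),
         GRing.comm (V t) (O s) & GRing.comm (V t) (V s)]) ->
  (\prod_(t <- r) U t) * (\prod_(t <- r) O t) * (\prod_(t <- rev r) V t) =
  \prod_(t <- r) (U t * O t * V t).
Proof.
elim: r => [|t r IH] /=; first by rewrite !big_nil !mulr1.
move=> /andP[tr ur] hc.
have hct s : s \in r -> [/\ GRing.comm (O t) (U s), GRing.comm (V t) (U s),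
                           GRing.comm (V t) (O s) & GRing.comm (V t) (V s)].
  move=> sr; apply: hc; rewrite ?inE ?sr ?orbT ?eqxx //.
  by apply: contraNneq tr => <-.
rewrite rev_cons big_rcons /= !big_cons -(IH ur); last first.
  by move=> s u sr ur' su; apply: hc; rewrite ?inE ?sr ?ur' ?orbT.
have cO : GRing.comm (O t) (\prod_(s <- r) U s).
  by rewrite big_seq; apply: commr_prod => s /hct[].
have cV : GRing.comm (V t)
   ((\prod_(s <- r) U s) * (\prod_(s <- r) O s) * (\prod_(s <- rev r) V s)).
  apply: commrM; first apply: commrM.
  - by rewrite big_seq; apply: commr_prod => s /hct[].
  - by rewrite big_seq; apply: commr_prod => s /hct[].
  - by rewrite big_seq; apply: commr_prod => s; rewrite mem_rev => /hct[].
rewrite -[U t * O t * V t * _]mulrA cV !mulrA.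
by rewrite -[U t * _ * O t]mulrA -cO !mulrA.
Qed.

End ProductRearrangement.

Section Anticommutation.
Variables (R : realType) (M : nat).
Local Open Scope ring_scope.
Local Notation n := (2 ^ M)%N.
Local Notation a := (annih R M).
Local Notation adag := (creat R M).

(* The entry [<x| a_p |y>], with the sign read off the row [x] (the definition of
   [annih] reads it off the column [y]). *)
Definition annih_coef (p x y : nat) : R[i] :=
  if ~~ occ x p && (x + 2 ^ p == y)%N then (-1) ^+ jw_count x p else 0.

Lemma annih_mxE p (x y : 'I_n) : a p x y = annih_coef p x y.
Proof.
rewrite mxE /annih_coef; case: eqP => [<-|_]; last by rewrite !andbF.
rewrite occ_addn_pow_self !andbT; case: (boolP (occ x p)) => //= hx.
by rewrite jw_count_addn_pow // ltnn addn0.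
Qed.

Lemma creat_mxE p (x y : 'I_n) : adag p x y = annih_coef p y x.
Proof.
rewrite adjmxE annih_mxE /annih_coef; case: ifP => _; last by rewrite rmorph0.
by rewrite rmorphXn rmorphN1.
Qed.

Lemma annih_coef_occ p x y : occ x p -> annih_coef p x y = 0.
Proof. by rewrite /annih_coef => ->. Qed.

Lemma annih_coef_shift p x :
  ~~ occ x p -> annih_coef p x (x + 2 ^ p)%N = (-1) ^+ jw_count x p.
Proof. by rewrite /annih_coef eqxx andbT => ->. Qed.

Lemma sum_annih_coefl p x (G : nat -> R[i]) :
  \sum_(z < n) annih_coef p x z * G z =
  if (x + 2 ^ p < n)%N then annih_coef p x (x + 2 ^ p)%N * G (x + 2 ^ p)%N else 0.
Proof.
rewrite -(sum_ord_pick _ (fun z => annih_coef p x z * G z)).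
apply: eq_bigr => z _; case: eqP => [-> //|/eqP hne].
by rewrite /annih_coef eq_sym (negbTE hne) andbF mul0r.
Qed.

Lemma sum_annih_coefr p (x : 'I_n) (G : nat -> R[i]) :
  \sum_(z < n) G z * annih_coef p z x =
  if (2 ^ p <= x)%N then G (x - 2 ^ p)%N * annih_coef p (x - 2 ^ p) x else 0.
Proof.
case: leqP => hx; last first.
  apply: big1 => z _; rewrite /annih_coef.
  case: eqP => [e|]; rewrite ?andbF ?mulr0 //.
  by move: hx; rewrite -e ltnNge leq_addl.
have := @sum_ord_pick _ n (x - 2 ^ p)%N (fun z => G z * annih_coef p z x).
rewrite (leq_ltn_trans (leq_subr _ _) (ltn_ord x)) => <-.
apply: eq_bigr => z _; case: eqP => [-> //|hne].
rewrite /annih_coef; case: eqP => [e|]; rewrite ?andbF ?mulr0 //.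
by case: hne; rewrite -e addnK.
Qed.

Lemma annih_anticomm p q : p != q -> (p < M)%N -> (q < M)%N ->
  a p * a q = - (a q * a p).
Proof.
(* Both entries vanish unless [y = x + 2 ^ p + 2 ^ q] with bits [p], [q] of [x]
   clear; then exactly one of the two paths picks up the extra sign. *)
move=> hpq hp hq; apply/matrixP => x y; rewrite opp_mxE !mul_mxE.
under eq_bigr do rewrite !annih_mxE.
under [X in _ = - X]eq_bigr do rewrite !annih_mxE.
rewrite (sum_annih_coefl p x (annih_coef q ^~ y)) (sum_annih_coefl q x (annih_coef p ^~ y)).
have [hxp|hxp] := boolP (occ x p).
  rewrite annih_coef_occ // mul0r if_same.
  case: (boolP (occ x q)) => hxq; first by rewrite annih_coef_occ // mul0r if_same oppr0.
  by rewrite (@annih_coef_occ p (x + 2 ^ q)%N) ?mulr0 ?if_same ?oppr0 // occ_addn_pow.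
have [hxq|hxq] := boolP (occ x q).
  rewrite [in RHS]annih_coef_occ // mul0r if_same oppr0.
  by rewrite (@annih_coef_occ q (x + 2 ^ p)%N) ?mulr0 ?if_same // occ_addn_pow // eq_sym.
rewrite !addn_pow_ltn // !annih_coef_shift //.
rewrite /annih_coef occ_addn_pow 1?eq_sym // occ_addn_pow // hxp hxq /=.
rewrite [(x + 2 ^ q + 2 ^ p)%N]addnAC.
have [_|ne] := eqVneq (x + 2 ^ p + 2 ^ q)%N y; last by rewrite !mulr0 oppr0.
rewrite (@jw_count_addn_pow x p q hxp) (@jw_count_addn_pow x q p hxq) !exprD.
by case: ltngtP hpq => //= _ _; ring.
Qed.

Lemma annih_coef_pred p y : (2 ^ p <= y)%N ->
  annih_coef p (y - 2 ^ p) y = if occ y p then (-1) ^+ jw_count (y - 2 ^ p) p else 0.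
Proof.
move=> hle; have -> : occ y p = ~~ occ (y - 2 ^ p) p.
  by rewrite -occ_addn_pow_self subnK.
by rewrite /annih_coef subnK // eqxx andbT.
Qed.

Lemma annih_creat_anticomm p q : p != q -> (p < M)%N -> (q < M)%N ->
  a p * adag q = - (adag q * a p).
Proof.
(* Both entries vanish unless [x = z + 2 ^ q] and [y = z + 2 ^ p] with bits [p],
   [q] of [z] clear; then exactly one of the two paths picks up the extra sign. *)
move=> hpq hp hq; apply/matrixP => x y; rewrite opp_mxE !mul_mxE.
under eq_bigr do rewrite annih_mxE creat_mxE.
under [X in _ = - X]eq_bigr do rewrite creat_mxE annih_mxE.
rewrite (sum_annih_coefl p x (annih_coef q y)) (sum_annih_coefr p y (annih_coef q ^~ x)).
have [hyp|hyp] := boolP (occ y p); last first.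
  have -> : (if (2 ^ p <= y)%N then annih_coef q (y - 2 ^ p) x * annih_coef p (y - 2 ^ p) y
             else 0) = 0.
    by case: leqP => // hle; rewrite annih_coef_pred // (negbTE hyp) mulr0.
  rewrite oppr0; case: ifP => // _.
  have [hxp|hxp] := boolP (occ x p); first by rewrite annih_coef_occ ?mul0r.
  rewrite annih_coef_shift //.
  have [hyq|hyq] := boolP (occ y q); first by rewrite annih_coef_occ ?mulr0.
  rewrite /annih_coef hyq /=; case: eqP => [e|]; rewrite ?mulr0 //.
  move: (congr1 (occ^~ p) e) => /=.
  by rewrite occ_addn_pow // occ_addn_pow_self hxp (negbTE hyp).
have hle := occ_pow_leq _ _ hyp; rewrite hle annih_coef_pred // hyp.
set z := (y - 2 ^ p)%N; have ey : (y : nat) = (z + 2 ^ p)%N by rewrite subnK.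
have hzp : ~~ occ z p by rewrite -occ_addn_pow_self -ey.
have [hzq|hzq] := boolP (occ z q).
  rewrite (@annih_coef_occ q z x) // mul0r oppr0 (@annih_coef_occ q y) ?mulr0 ?if_same //.
  by rewrite ey occ_addn_pow 1?eq_sym.
have hyq : ~~ occ y q by rewrite ey occ_addn_pow 1?eq_sym.
have [ex|nex] := eqVneq (z + 2 ^ q)%N x; last first.
  rewrite /annih_coef [in RHS](negbTE hzq) (negbTE nex) mul0r oppr0 hyq /=.
  by rewrite ey addnAC (eqn_add2r (2 ^ p) (z + 2 ^ q)) (negbTE nex) mulr0 if_same.
have hxp : ~~ occ x p by rewrite -ex occ_addn_pow.
rewrite addn_pow_ltn // annih_coef_shift // /annih_coef hyq ey addnAC -ex eqxx hzq /=.
rewrite eqxx (@jw_count_addn_pow z q p hzq) (@jw_count_addn_pow z p q hzp) !exprD.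
by case: ltngtP hpq => //= _ _; ring.
Qed.

Lemma creat_anticomm p q : p != q -> (p < M)%N -> (q < M)%N ->
  adag p * adag q = - (adag q * adag p).
Proof.
move=> hpq hp hq; rewrite /creat -adjmxM (annih_anticomm q p) 1?eq_sym //.
by rewrite adjmxN adjmxM.
Qed.

Definition ladder_at (p : nat) (b : bool) : 'M[R[i]]_n := if b then adag p else a p.

Lemma ladder_at_anticomm p q b c : p != q -> (p < M)%N -> (q < M)%N ->
  ladder_at p b * ladder_at q c = - (ladder_at q c * ladder_at p b).
Proof.
move=> hpq hp hq; case: b; case: c; rewrite /ladder_at.
- exact: creat_anticomm.
- by rewrite (annih_creat_anticomm q p) 1?eq_sym // opprK.
- exact: annih_creat_anticomm.
- exact: annih_anticomm.
Qed.

Lemma even_prod_ladder_comm (I : Type) (r : seq I) (mode : I -> nat) (kind : I -> bool)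
    p b :
  ~~ odd (size r) -> (p < M)%N -> (forall l, (mode l < M)%N /\ mode l != p) ->
  (\prod_(l <- r) ladder_at (mode l) (kind l)) * ladder_at p b =
  ladder_at p b * \prod_(l <- r) ladder_at (mode l) (kind l).
Proof.
move=> hr hp hmode; rewrite prod_anticomm => [|l].
  by rewrite -signr_odd (negbTE hr) mul1r.
by have [hl hlp] := hmode l; exact: ladder_at_anticomm.
Qed.

End Anticommutation.

Section Generation.
Variables (R : realType) (M : nat).
Local Open Scope ring_scope.
Local Notation n := (2 ^ M)%N.
Local Notation a := (annih R M).
Local Notation adag := (creat R M).

Definition vacuum : 'I_n := Ordinal (expn_gt0 2 M).

Lemma annih_creat_mxE i (u v : 'I_n) : (i < M)%N ->
  (a i * adag i) u v = ((u == v) && ~~ occ u i)%:R.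
Proof.
move=> hi; rewrite mul_mxE.
under eq_bigr do rewrite annih_mxE creat_mxE.
rewrite (sum_annih_coefl _ _ i u (annih_coef R i v)).
have [hu|hu] := boolP (occ u i); first by rewrite annih_coef_occ ?mul0r ?if_same ?andbF.
rewrite addn_pow_ltn // annih_coef_shift // /annih_coef eqn_add2r.
have [<-|ne] := eqVneq u v; last first.
  by rewrite (_ : (v : nat) == u = false) ?andbF ?mulr0 //; apply/negbTE; rewrite eq_sym.
by rewrite eqxx hu /= -expr2 sqrr_sign.
Qed.

Lemma prod_annih_creat_mxE (r : seq nat) (u v : 'I_n) : all (fun i => i < M)%N r ->
  (\prod_(i <- r) (a i * adag i)) u v = ((u == v) && all (fun i => ~~ occ u i) r)%:R.
Proof.
elim: r u v => [|i r IH] u v /=; first by rewrite big_nil mxE andbT.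
case/andP=> hi hr; rewrite big_cons mul_mxE (bigD1 u) //=.
rewrite [X in _ + X]big1 ?addr0; last first.
  by move=> z hz; rewrite annih_creat_mxE // eq_sym (negbTE hz) mul0r.
rewrite annih_creat_mxE // IH // eqxx -natrM.
by case: (u == v); case: occ; case: all.
Qed.

Lemma all_unocc_iota (u : 'I_n) : all (fun i => ~~ occ u i) (iota 0 M) = (u == vacuum).
Proof.
apply/allP/eqP => [hall|->]; last by move=> i _; rewrite /occ div0n.
apply/val_inj/eqP; rewrite /= -leqn0 leqNgt; apply/negP => hu.
have [j [z [eu hz hle _]]] := top_bit_decomposition _ hu.
have hj : (j < M)%N.
  by rewrite -(ltn_exp2l _ _ (isT : (1 < 2)%N)); exact: leq_ltn_trans hle (ltn_ord u).
by move: (hall j); rewrite mem_iota add0n hj eu occ_addn_pow_self hz => /(_ isT).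
Qed.

Lemma vacuum_projector : \prod_(i <- iota 0 M) (a i * adag i) = delta_mx vacuum vacuum.
Proof.
apply/matrixP => u v; rewrite prod_annih_creat_mxE; last first.
  by apply/allP => i; rewrite mem_iota.
rewrite all_unocc_iota mxE; have [->|] := eqVneq u vacuum; last by rewrite !andbF.
by rewrite andbT eq_sym.
Qed.

Lemma creat_delta j (z x : 'I_n) : ~~ occ z j -> (x : nat) = (z + 2 ^ j)%N ->
  adag j * delta_mx z vacuum = (-1) ^+ jw_count z j *: delta_mx x vacuum.
Proof.
move=> hz ex; apply/matrixP => u v; rewrite mul_mxE !mxE (bigD1 z) //=.
rewrite [X in _ + X]big1 ?addr0.
  rewrite creat_mxE !mxE eqxx /annih_coef hz -ex /=.
  have -> : ((x : nat) == u) = (u == x) by rewrite eq_sym.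
  by case: (u == x); case: (v == vacuum); rewrite /= ?mulr1 ?mulr0 ?mul0r.
by move=> w hw; rewrite [delta_mx _ _ _ _]mxE (negbTE hw) mulr0.
Qed.

Definition ladder_closed (Q : 'M[R[i]]_n -> Prop) : Prop :=
  [/\ Q 1, forall A B, Q A -> Q B -> Q (A + B), forall c A, Q A -> Q (c *: A),
      forall A B, Q A -> Q B -> Q (A * B) &
      forall j b, (j < M)%N -> Q (ladder_at R M j b)].

Section LadderClosed.
Variable Q : 'M[R[i]]_n -> Prop.
Hypothesis hQ : ladder_closed Q.

Lemma ladder_closed_adj : ladder_closed (fun A => Q (adj A)).
Proof.
case: hQ => Q1 QD QZ QM Qlad; split.
- by rewrite adjmx1.
- by move=> A B hA hB; rewrite adjmxD; apply: QD.
- by move=> c A hA; rewrite adjmxZ; apply: QZ.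
- by move=> A B hA hB; rewrite adjmxM; apply: QM.
- move=> j b hj; have := Qlad j (~~ b) hj.
  by rewrite /ladder_at /creat; case: b => //=; rewrite adjmxK.
Qed.

Lemma ladder_closed_delta_vacuum (x : 'I_n) : Q (delta_mx x vacuum).
Proof.
case: hQ => Q1 QD QZ QM Qlad.
have [k] := ubnP x; elim: k x => // k IH x; rewrite ltnS => hxk.
have [x0|hx] := posnP x.
  rewrite (_ : x = vacuum); last exact: val_inj.
  rewrite -vacuum_projector big_seq.
  apply: big_ind => // i; rewrite mem_iota => /andP[_ hi].
  by apply: QM; [exact: (Qlad i false) | exact: (Qlad i true)].
have [j [z [ex hz hle hzx]]] := top_bit_decomposition _ hx.
have hzn : (z < n)%N := ltn_trans hzx (ltn_ord x).
have hj : (j < M)%N.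
  by rewrite -(ltn_exp2l _ _ (isT : (1 < 2)%N)); exact: leq_ltn_trans hle (ltn_ord x).
rewrite -(signrZK (jw_count z j) (delta_mx x vacuum)).
rewrite -(creat_delta j (Ordinal hzn) x hz ex).
apply/QZ/QM; first exact: (Qlad j true).
by apply: IH; rewrite (leq_trans hzx).
Qed.

End LadderClosed.

Theorem ladder_closed_all Q : ladder_closed Q -> forall A, Q A.
Proof.
move=> hQ A; have [Q1 QD QZ QM _] := hQ.
have Q0 : Q 0 by have := QZ 0 1 Q1; rewrite scale0r.
rewrite [A]matrix_sum_delta; apply: big_ind => // x _; apply: big_ind => // y _.
apply: QZ; rewrite -(mul_delta_mx (R := R[i]) vacuum x y) mulmxE.
apply: QM; first exact: ladder_closed_delta_vacuum _ hQ _.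
by rewrite -adjmx_delta; exact: ladder_closed_delta_vacuum _ (ladder_closed_adj _ hQ) _.
Qed.

End Generation.

Section ComplexSequences.
Context {R : realType}.
Local Open Scope ring_scope.
Implicit Types (u v : nat -> R[i]) (x y z : R[i]).

Lemma creD x y : cre (x + y) = cre x + cre y. Proof. by case: x; case: y. Qed.
Lemma cimD x y : cim (x + y) = cim x + cim y. Proof. by case: x; case: y. Qed.
Lemma creM x y : cre (x * y) = cre x * cre y - cim x * cim y.
Proof. by case: x; case: y. Qed.
Lemma cimM x y : cim (x * y) = cre x * cim y + cim x * cre y.
Proof. by case: x => a b; case: y. Qed.

Lemma cre_sum (I : Type) (r : seq I) (f : I -> R[i]) :
  cre (\sum_(i <- r) f i) = \sum_(i <- r) cre (f i).
Proof. by elim: r => [|i r IH]; rewrite ?big_nil // !big_cons creD IH. Qed.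

Lemma cim_sum (I : Type) (r : seq I) (f : I -> R[i]) :
  cim (\sum_(i <- r) f i) = \sum_(i <- r) cim (f i).
Proof. by elim: r => [|i r IH]; rewrite ?big_nil // !big_cons cimD IH. Qed.

Lemma cre_realM (r : R) z : cre ((r%:C)%C * z) = r * cre z.
Proof. by case: z => a b /=; rewrite mul0r subr0. Qed.

Lemma cim_realM (r : R) z : cim ((r%:C)%C * z) = r * cim z.
Proof. by case: z => a b /=; rewrite mul0r addr0. Qed.

Definition ccvg u l :=
  ((fun m => cre (u m)) @ \oo --> cre l)%classic /\
  ((fun m => cim (u m)) @ \oo --> cim l)%classic.

Lemma ccvg_clim u l : ccvg u l -> clim u = l.
Proof.
by case=> h1 h2; rewrite /clim (cvg_lim _ h1) // (cvg_lim _ h2) //; case: l {h1 h2}.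
Qed.

Lemma ccvg_cst c : ccvg (fun=> c) c.
Proof. by split; apply: cvg_cst. Qed.

Lemma ccvgD u v a b : ccvg u a -> ccvg v b -> ccvg (fun m => u m + v m) (a + b).
Proof.
case=> h1 h2 [h3 h4]; split.
  have -> : (fun m => cre (u m + v m)) = (fun m => cre (u m)) + (fun m => cre (v m)).
    by apply: boolp.funext => m /=; rewrite creD.
  by rewrite creD; apply: cvgD.
have -> : (fun m => cim (u m + v m)) = (fun m => cim (u m)) + (fun m => cim (v m)).
  by apply: boolp.funext => m /=; rewrite cimD.
by rewrite cimD; apply: cvgD.
Qed.

Lemma ccvgMl c u a : ccvg u a -> ccvg (fun m => c * u m) (c * a).
Proof.
case=> h1 h2; split.
  have -> : (fun m => cre (c * u m)) =
     (fun m => cre c * cre (u m)) - (fun m => cim c * cim (u m)).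
    by apply: boolp.funext => m /=; rewrite creM.
  by rewrite creM; apply: cvgB; apply: cvgMl_tmp.
have -> : (fun m => cim (c * u m)) =
   (fun m => cre c * cim (u m)) + (fun m => cim c * cre (u m)).
  by apply: boolp.funext => m /=; rewrite cimM.
by rewrite cimM; apply: cvgD; apply: cvgMl_tmp.
Qed.

Lemma ccvgMr c u a : ccvg u a -> ccvg (fun m => u m * c) (a * c).
Proof.
move=> /(ccvgMl c); rewrite mulrC.
by under boolp.eq_fun do rewrite mulrC.
Qed.

Lemma ccvg_sum (I : Type) (r : seq I) (u : I -> nat -> R[i]) (a : I -> R[i]) :
  (forall i, ccvg (u i) (a i)) ->
  ccvg (fun m => \sum_(i <- r) u i m) (\sum_(i <- r) a i).
Proof.
move=> h; elim: r => [|i r IH].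
  under boolp.eq_fun do rewrite big_nil.
  by rewrite big_nil; exact: ccvg_cst.
under boolp.eq_fun do rewrite big_cons.
by rewrite big_cons; exact: ccvgD.
Qed.

Lemma ccvg_conj u l : ccvg u l -> ccvg (fun m => Num.conj (u m)) (Num.conj l).
Proof.
case: l => a b [h1 h2]; split.
  have -> : (fun m => cre (Num.conj (u m))) = (fun m => cre (u m)).
    by apply: boolp.funext => m; case: (u m).
  exact: h1.
have -> : (fun m => cim (Num.conj (u m))) = (fun m => - cim (u m)).
  by apply: boolp.funext => m; case: (u m).
exact: cvgN h2.
Qed.

Definition cnorm1 z := `|cre z| + `|cim z|.

Lemma cnorm1_ge0 z : 0 <= cnorm1 z.
Proof. by rewrite /cnorm1 addr_ge0. Qed.

Lemma cnorm1D x y : cnorm1 (x + y) <= cnorm1 x + cnorm1 y.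
Proof.
rewrite /cnorm1 creD cimD.
have h1 := ler_normD (cre x) (cre y); have h2 := ler_normD (cim x) (cim y).
lra.
Qed.

Lemma cnorm1M x y : cnorm1 (x * y) <= cnorm1 x * cnorm1 y.
Proof.
rewrite /cnorm1 creM cimM.
have h1 : `|cre x * cre y - cim x * cim y| <= `|cre x| * `|cre y| + `|cim x| * `|cim y|.
  by rewrite -!normrM -(normrN (cim x * cim y)) ler_normD.
have h2 : `|cre x * cim y + cim x * cre y| <= `|cre x| * `|cim y| + `|cim x| * `|cre y|.
  by rewrite -!normrM ler_normD.
rewrite mulrDl !mulrDr; lra.
Qed.

Lemma cnorm1_sum (I : Type) (r : seq I) (f : I -> R[i]) :
  cnorm1 (\sum_(i <- r) f i) <= \sum_(i <- r) cnorm1 (f i).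
Proof.
elim: r => [|i r IH]; first by rewrite !big_nil /cnorm1 /= normr0 addr0.
by rewrite !big_cons; apply: le_trans (cnorm1D _ _) _; exact: lerD.
Qed.

End ComplexSequences.

Section MatrixExponential.
Variables (R : realType) (n : nat).
Local Open Scope ring_scope.
Implicit Types (A B C X : 'M[R[i]]_n) (F : nat -> 'M[R[i]]_n).

Definition mx_norm1 A := \sum_x \sum_y cnorm1 (A x y).

Lemma mx_norm1_ge0 A : 0 <= mx_norm1 A.
Proof. by do 2![apply: sumr_ge0 => ? _]; exact: cnorm1_ge0. Qed.

Lemma cnorm1_expr_le A k x y : cnorm1 ((A ^+ k) x y) <= mx_norm1 A ^+ k.
Proof.
elim: k x y => [|k IH] x y.
  by rewrite expr0 !mxE /cnorm1; case: (x == y); rewrite /= ?normr1 normr0 addr0.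
rewrite exprS mul_mxE; apply: le_trans (cnorm1_sum _ _ _) _.
apply: (@le_trans _ _ (\sum_z cnorm1 (A x z) * mx_norm1 A ^+ k)).
  apply: ler_sum => z _; apply: le_trans (cnorm1M _ _) _.
  by apply: ler_wpM2l; [exact: cnorm1_ge0 | exact: IH].
rewrite -mulr_suml exprS ler_wpM2r ?exprn_ge0 ?mx_norm1_ge0 //.
rewrite /mx_norm1 [leRHS](bigD1 x) //= lerDl.
by do 2![apply: sumr_ge0 => ? _]; exact: cnorm1_ge0.
Qed.

Definition exp_partial A m := \sum_(k < m) ((k`!)%:R^-1 *: A ^+ k).

Lemma expm_mxE A x y : expm A x y = clim (fun m => exp_partial A m x y).
Proof.
rewrite mxE; congr clim; apply: boolp.funext => m.
by rewrite summxE; apply: eq_bigr => k _; rewrite mxE mulrC.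
Qed.

Lemma exp_coeff_dominated_cvg (g : nat -> R) (b : R) : 0 <= b ->
  (forall k, `|g k| <= b ^+ k) -> cvgn (series (fun k => (k`!%:R)^-1 * g k)).
Proof.
move=> b0 hg; apply: normed_cvg.
apply: (@series_le_cvg _ _ (exp_coeff b)).
- by move=> k /=.
- by move=> k; exact: exp_coeff_ge0.
- move=> k /=; rewrite exp_coeffE /= normrM ger0_norm ?invr_ge0 ?ler0n //.
  by apply: ler_wpM2l; [rewrite invr_ge0 ler0n | exact: hg].
- exact: is_cvg_series_exp_coeff.
Qed.

Definition mx_ccvg F B := forall x y, ccvg (fun m => F m x y) (B x y).

Lemma mx_ccvg_unique F B C : mx_ccvg F B -> mx_ccvg F C -> B = C.
Proof.
move=> hB hC; apply/matrixP => x y.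
by rewrite -(ccvg_clim _ _ (hB x y)) (ccvg_clim _ _ (hC x y)).
Qed.

Lemma mx_ccvgMl X F B : mx_ccvg F B -> mx_ccvg (fun m => X * F m) (X * B).
Proof.
move=> hF x y; rewrite mul_mxE.
under boolp.eq_fun do rewrite mul_mxE.
by apply: ccvg_sum => z; apply: ccvgMl.
Qed.

Lemma mx_ccvgMr X F B : mx_ccvg F B -> mx_ccvg (fun m => F m * X) (B * X).
Proof.
move=> hF x y; rewrite mul_mxE.
under boolp.eq_fun do rewrite mul_mxE.
by apply: ccvg_sum => z; apply: ccvgMr.
Qed.

Lemma mx_ccvg_adj F B : mx_ccvg F B -> mx_ccvg (fun m => adj (F m)) (adj B).
Proof.
move=> hF x y; rewrite adjmxE.
under boolp.eq_fun do rewrite adjmxE.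
exact: ccvg_conj.
Qed.

Lemma exp_partial_cvg A : mx_ccvg (exp_partial A) (expm A).
Proof.
move=> x y.
have invnatC (k : nat) : (k%:R : R[i])^-1 = (((k%:R : R)^-1)%:C)%C.
  by rewrite -(rmorph_nat (real_complex R)) -fmorphV.
have hre : (fun m => cre (exp_partial A m x y)) =
    series (fun k => (k`!%:R)^-1 * cre ((A ^+ k) x y)).
  apply: boolp.funext => m; rewrite /series /= big_mkord summxE cre_sum.
  by apply: eq_bigr => k _; rewrite mxE invnatC cre_realM.
have him : (fun m => cim (exp_partial A m x y)) =
    series (fun k => (k`!%:R)^-1 * cim ((A ^+ k) x y)).
  apply: boolp.funext => m; rewrite /series /= big_mkord summxE cim_sum.
  by apply: eq_bigr => k _; rewrite mxE invnatC cim_realM.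
have bound k : `|cre ((A ^+ k) x y)| <= mx_norm1 A ^+ k /\
                `|cim ((A ^+ k) x y)| <= mx_norm1 A ^+ k.
  have := cnorm1_expr_le A k x y; rewrite /cnorm1.
  have := normr_ge0 (cre ((A ^+ k) x y)); have := normr_ge0 (cim ((A ^+ k) x y)).
  by split; lra.
rewrite expm_mxE /clim /ccvg /=; split; [rewrite hre | rewrite him];
  by apply: exp_coeff_dominated_cvg (mx_norm1_ge0 A) _ => k; case: (bound k).
Qed.

Lemma expm_comm A X : X * A = A * X -> X * expm A = expm A * X.
Proof.
move=> hXA; have hS m : X * exp_partial A m = exp_partial A m * X.
  rewrite /exp_partial mulr_sumr mulr_suml; apply: eq_bigr => k _.
  by rewrite scalemxMl scalemxMr; congr (_ *: _); exact: commrX.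
apply: (@mx_ccvg_unique (fun m => X * exp_partial A m)).
  exact/mx_ccvgMl/exp_partial_cvg.
under boolp.eq_fun do rewrite hS.
exact/mx_ccvgMr/exp_partial_cvg.
Qed.

Lemma expm_commZ c A X :
  X * A = A * X -> X * expm (c *: A) = expm (c *: A) * X.
Proof. by move=> h; apply: expm_comm; rewrite scalemxMl scalemxMr h. Qed.

Lemma expm_commZ2 c d A B :
  A * B = B * A -> expm (c *: A) * expm (d *: B) = expm (d *: B) * expm (c *: A).
Proof. by move=> h; apply/expm_commZ/esym/expm_commZ. Qed.

Lemma adjmx_exp_partial A m : adj (exp_partial A m) = exp_partial (adj A) m.
Proof.
rewrite /exp_partial adjmx_sum; apply: eq_bigr => k _.
by rewrite adjmxZ adjmxX fmorphV rmorph_nat.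
Qed.

Lemma adjmx_expm A : adj (expm A) = expm (adj A).
Proof.
apply: (@mx_ccvg_unique (fun m => adj (exp_partial A m))).
  exact/mx_ccvg_adj/exp_partial_cvg.
under boolp.eq_fun do rewrite adjmx_exp_partial.
exact: exp_partial_cvg.
Qed.

End MatrixExponential.

Local Open Scope ring_scope.

Section Slices.
Context {R : realType} {N L : nat}.

Lemma slice_mode_lt t i : (t < N)%N -> (i < L)%N -> (t * L + i < N * L)%N.
Proof. by move=> ht hi; nia. Qed.

Lemma slice_mode_neq s t i j : s != t -> (i < L)%N -> (j < L)%N -> s * L + i != t * L + j.
Proof.
move=> hst hi hj; apply: contraNneq hst => e.
have hL : (0 < L)%N by apply: leq_ltn_trans hi.
by move: (congr1 (divn^~ L) e); rewrite /= !divnMDl // !divn_small // !addn0 => ->.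
Qed.

Section SliceHom.
Context {t : nat} {phi : fop R L -> fop R (N * L)}.
Hypothesis hphi : slice_hom R N L t phi.

Lemma slice_homD A B : phi (A + B) = phi A + phi B.
Proof. by case: hphi => hlin _ _ _ _; have := hlin 1 A B; rewrite !scale1r. Qed.

Lemma slice_hom0 : phi 0 = 0.
Proof. by apply: (addrI (phi 0)); rewrite -slice_homD !addr0. Qed.

Lemma slice_homZ c A : phi (c *: A) = c *: phi A.
Proof. by case: hphi => hlin _ _ _ _; rewrite -[c *: A]addr0 hlin slice_hom0 addr0. Qed.

Lemma slice_homM A B : phi (A * B) = phi A * phi B.
Proof. by case: hphi. Qed.

Lemma slice_hom1 : phi 1 = 1.
Proof. by case: hphi. Qed.

Lemma slice_hom_adj A : phi (adj A) = adj (phi A).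
Proof. by case: hphi. Qed.

Lemma slice_hom_ladder_at j b : (j < L)%N ->
  phi (ladder_at R L j b) = ladder_at R (N * L) (t * L + j) b.
Proof.
case: hphi => _ _ _ _ hann hj; case: b; rewrite /ladder_at ?hann //.
by rewrite /creat slice_hom_adj hann.
Qed.

Lemma slice_hom_monomial w :
  phi (monomial R L w) = \prod_(l <- w) ladder_at R (N * L) (t * L + l.1) l.2.
Proof.
elim: w => [|l w IH]; first by rewrite /monomial !big_nil slice_hom1.
by rewrite /monomial !big_cons slice_homM -/(monomial R L w) IH slice_hom_ladder_at.
Qed.

Lemma slice_hom_sum (I : Type) (r : seq I) (F : I -> fop R L) :
  phi (\sum_(i <- r) F i) = \sum_(i <- r) phi (F i).
Proof.
by elim: r => [|i r IH]; rewrite ?big_nil ?slice_hom0 // !big_cons slice_homD IH.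
Qed.

End SliceHom.

Lemma parity_preserving_comm_ladder s t (phi : fop R L -> fop R (N * L)) H j b :
  slice_hom R N L s phi -> parity_preserving R L H ->
  s != t -> (s < N)%N -> (t < N)%N -> (j < L)%N ->
  phi H * ladder_at R (N * L) (t * L + j) b = ladder_at R (N * L) (t * L + j) b * phi H.
Proof.
move=> hphi [w [weven ->]] hst hs ht hj.
rewrite (slice_hom_sum hphi) mulr_suml mulr_sumr big_seq [RHS]big_seq.
apply: eq_bigr => p hp.
rewrite (slice_homZ hphi) scalemxMl scalemxMr (slice_hom_monomial hphi).
rewrite even_prod_ladder_comm //.
- exact: (allP weven p hp).
- exact: slice_mode_lt.
- by move=> l; split; [exact: slice_mode_lt | exact: slice_mode_neq].
Qed.

Lemma slice_comm s t (phis phit : fop R L -> fop R (N * L)) H :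
  slice_hom R N L s phis -> slice_hom R N L t phit -> parity_preserving R L H ->
  s != t -> (s < N)%N -> (t < N)%N -> forall O, phis H * phit O = phit O * phis H.
Proof.
move=> hs ht hH hst sN tN; apply: ladder_closed_all; split.
- by rewrite (slice_hom1 ht) mulr1 mul1r.
- by move=> A B hA hB; rewrite (slice_homD ht) mulrDr mulrDl hA hB.
- by move=> c A hA; rewrite (slice_homZ ht) scalemxMl scalemxMr hA.
- by move=> A B hA hB; rewrite (slice_homM ht) mulrA hA -mulrA hB mulrA.
- move=> j b hj; rewrite (slice_hom_ladder_at ht) //.
  exact: (parity_preserving_comm_ladder s t phis H j b hs hH hst sN tN hj).
Qed.

End Slices.

Theorem lemma3 (R : realType) (L N : nat) (eps : R) (heps : 0 < eps)
  (phi : 'I_N -> fop R L -> fop R (N * L))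
  (hphi : forall t : 'I_N, slice_hom R N L t (phi t))
  (H : fop R L) (hH : herm_op H) (hpar : parity_preserving R L H) :
  (forall t s : 'I_N, phi t H * phi s H = phi s H * phi t H) /\
  (forall O : 'I_N -> fop R L,
     let U (t : 'I_N) := expm (Complex 0 (eps * (t : nat)%:R) *: phi t H) in
     let Uinv (t : 'I_N) := expm (Complex 0 (- (eps * (t : nat)%:R)) *: phi t H) in
     (\prod_(t < N) U t) * (\prod_(t < N) phi t (O t)) * adj (\prod_(t < N) U t)
     = \prod_(t < N) (U t * phi t (O t) * Uinv t)).
Proof.
have comm_HO (s t : 'I_N) O : s != t -> phi s H * phi t O = phi t O * phi s H.
  by move=> hst; apply: slice_comm; rewrite ?ltn_ord.
have comm_HH (t s : 'I_N) : phi t H * phi s H = phi s H * phi t H.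
  by have [->|hts] := eqVneq t s; last exact: comm_HO.
split=> // O U Uinv.
have adjU t : adj (U t) = Uinv t.
  by rewrite adjmx_expm adjmxZ -(slice_hom_adj (hphi t)) hH.
rewrite adjmx_prod; under eq_bigr do rewrite adjU.
apply: prod_sandwich (index_enum_uniq _) _ => s t _ _ hst; split.
- by apply/expm_commZ; rewrite comm_HO.
- exact: expm_commZ2 (comm_HH t s).
- by apply/esym/expm_commZ; rewrite comm_HO // eq_sym.
- exact: expm_commZ2 (comm_HH t s).
Qed.
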